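(* Let $G$ be a reduced simple undirected graph with terminals $s,t$ and maximum degree $\delta$, and let $S$ be a feedback vertex set of $G$ whose size is at most twice the minimum size of a feedback vertex set of $G$. Then $T=S\cup N(S)$ is a tracking set for $G$, and $|T|\le 2(\delta+1)\cdot OPT$, where $OPT$ is the minimum size of a tracking set for $G$.
   Context: An $s$-$t$ path is a simple path from $s$ to $t$. A set $T\subseteq V(G)$ is a tracking set if for any two distinct $s$-$t$ paths $P_1,P_2$, the sequence of vertices of $T\cap V(P_1)$ in the order encountered along $P_1$ differs from the sequence of vertices of $T\cap V(P_2)$ in the order encountered along $P_2$. A graph is reduced if every vertex and every edge lies on at least one $s$-$t$ path. A feedback vertex set is a set of vertices whose removal leaves a forest. $N(S)=\bigcup_{v\in S}N(v)$. *)

From mathcomp Require Import all_boot.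
Set Implicit Arguments. Unset Strict Implicit. Unset Printing Implicit Defensive.

Section Graphs.
Variables (V : finType) (e : rel V).

Definition simple_graph : Prop := symmetric e /\ irreflexive e.

Definition nbhd (v : V) : {set V} := [set w | e v w].
Definition nbhdS (S : {set V}) : {set V} := \bigcup_(v in S) nbhd v.

Definition max_degree : nat := \max_(v : V) #|nbhd v|.

Definition st_path (s t : V) (p : seq V) : bool :=
  if p is x :: q then [&& x == s, path e x q, last x q == t & uniq p]
  else false.

Definition tracking_set (s t : V) (T : {set V}) : Prop :=
  forall P1 P2 : seq V, st_path s t P1 -> st_path s t P2 -> P1 <> P2 ->
    [seq v <- P1 | v \in T] <> [seq v <- P2 | v \in T].

Definition reduced (s t : V) : Prop :=
  (forall v : V, exists P, st_path s t P /\ v \in P) /\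
  (forall u v : V, e u v ->
     exists P, st_path s t P /\ (infix [:: u; v] P || infix [:: v; u] P)).

Definition is_graph_cycle (c : seq V) : bool :=
  [&& 3 <= size c, uniq c & cycle e c].

Definition fvs (S : {set V}) : Prop :=
  forall c : seq V, is_graph_cycle c -> has (fun v => v \in S) c.

End Graphs.

From mathcomp Require Import all_boot.
Set Implicit Arguments. Unset Strict Implicit. Unset Printing Implicit Defensive.

(* If every cycle contains three vertices of T, then T is a tracking set:
   two distinct s-t paths with the same trace, after the last vertex x of their
   common prefix, reach the same first tracked vertex z (or t), and the two
   x-z segments close a cycle whose only tracked vertices are x and z.  Every
   cycle meets the feedback vertex set S in some v, and v together with its two
   neighbours on the cycle lies in S u N(S).

   Conversely, in a reduced graph every tracking set T' is a feedback vertex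
   set: an s-t path through an edge of a T'-free cycle can be rerouted along
   either arc of the cycle between its first and last vertex on the cycle,
   giving two s-t paths with the same trace.  Hence |S| <= 2|T'|, and
   |S u N(S)| <= (d+1)|S|. *)

Lemma last_rev_belast (T : Type) (x : T) p : last (last x p) (rev (belast x p)) = x.
Proof.
have := congr1 (last x \o rev) (lastI x p); rewrite /= rev_rcons rev_cons last_rcons.
by move/esym.
Qed.

Section SeqLemmas.
Variable T : eqType.
Implicit Types (a : pred T) (p s : seq T).

Lemma split_first a p :
  has a p -> exists pre u post, [/\ p = pre ++ u :: post, a u & ~~ has a pre].
Proof.
elim: p => [|x p IH] //= /orP [ax | hp]; first by exists [::], x, p.
have [ax | nax] := boolP (a x); first by exists [::], x, p.
have [pre [u [post [-> au hpre]]]] := IH hp.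
by exists (x :: pre), u, post; rewrite /= (negbTE nax).
Qed.

Lemma split_last a p :
  has a p -> exists pre u post, [/\ p = pre ++ u :: post, a u & ~~ has a post].
Proof.
rewrite -has_rev => /split_first [pre [u [post [E au hpre]]]].
exists (rev post), u, (rev pre); rewrite has_rev; split=> //.
by rewrite -[p]revK E rev_cat rev_cons cat_rcons.
Qed.

Lemma split_first_last a p x y :
  uniq p -> x \in p -> y \in p -> a x -> a y -> x != y ->
  exists pre u mid w suf,
    [/\ p = pre ++ u :: mid ++ w :: suf, a u, a w, u != w & ~~ has a (pre ++ suf)].
Proof.
move=> up xp yp ax ay nxy.
have /split_first [pre [u [rest [Ep au hpre]]]] : has a p by apply/hasP; exists x.
have /split_last [mid [w [suf [Erest aw hsuf]]]] : has a rest.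
  apply: contraNT nxy => /hasPn hrest.
  have onlyu v : v \in p -> a v -> v = u.
    rewrite Ep mem_cat inE => /or3P [vpre | /eqP // | vrest] av.
    - by move/hasPn: hpre => /(_ v vpre); rewrite av.
    - by move: (hrest v vrest); rewrite av.
  by rewrite (onlyu x xp ax) (onlyu y yp ay).
exists pre, u, mid, w, suf; rewrite has_cat negb_or hpre hsuf -Erest; split=> //.
apply: contraTneq up => uw.
by rewrite Ep Erest uw cat_uniq /= mem_cat inE eqxx orbT !andbF.
Qed.

Lemma count_le2 a x y s :
  uniq s -> {in s, forall v, a v -> v \in [:: x; y]} -> count a s <= 2.
Proof.
move=> us sxy; rewrite -size_filter.
apply: (uniq_leq_size (s2 := [:: x; y])); first exact: filter_uniq.
by move=> v; rewrite mem_filter => /andP [av vs]; apply: sxy.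
Qed.

Lemma splice_inj (pre m1 m2 suf : seq T) :
  pre ++ m1 ++ suf = pre ++ m2 ++ suf -> m1 = m2.
Proof.
move=> E; have sz : size m1 = size m2.
  by move/(congr1 size): E; rewrite !size_cat => /addnI /addIn.
by move/eqP: E; rewrite !eqseq_cat // !eqxx andbT => /eqP.
Qed.

End SeqLemmas.

Section Graph.
Variables (V : finType) (e : rel V).
Hypothesis esym : symmetric e.

Lemma rev_belast_path x p : path e (last x p) (rev (belast x p)) = path e x p.
Proof. by rewrite rev_path; apply: eq_path => y z; rewrite esym. Qed.

Section CycleHits.
Variable T : {set V}.

Lemma first_hit_prefix x h p :
  path e x (h :: p) ->
  exists q, [/\ path e x (h :: q), {subset h :: q <= h :: p},
    last h q = head (last h p) [seq v <- h :: p | v \in T]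
    & {in h :: q, forall v, v \in T -> v = last h q}].
Proof.
elim: p x h => [|h' p IH] x h hp.
  exists [::]; split=> //=; first by case: ifP.
  by move=> v; rewrite inE => /eqP.
have [hT | hT] := boolP (h \in T).
  exists [::]; split=> /=; first by move: hp => /= /andP [->].
  - by move=> v; rewrite !inE => /eqP ->; rewrite eqxx.
  - by rewrite hT.
  - by move=> v; rewrite inE => /eqP.
move: hp => /= /andP [exh hp]; have [q [pq sq lq Tq]] := IH h h' hp.
exists (h' :: q); split=> /=; first by rewrite exh.
- move=> v; rewrite inE => /orP [/eqP -> | /sq]; first by rewrite mem_head.
  by move=> vp; rewrite inE vp orbT.
- by rewrite (negbTE hT) lq.
- by move=> v; rewrite inE => /orP [/eqP -> | /Tq //]; rewrite (negbTE hT).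
Qed.

Hypothesis cycle_hits3 : forall c, is_graph_cycle e c -> 2 < count [in T] c.

Lemma no_untracked_fork x z h1 q1 h2 q2 :
  h1 != h2 -> path e x (h1 :: q1) -> path e x (h2 :: q2) ->
  last h1 q1 = z -> last h2 q2 = z -> x \notin h1 :: q1 -> x \notin h2 :: q2 ->
  {in h1 :: q1, forall v, v \in T -> v = z} ->
  {in h2 :: q2, forall v, v \in T -> v = z} -> False.
Proof.
move=> ne /andP [ex1 p1] /andP [ex2 p2] l1 l2 x1 x2 T1 T2.
set back := rev (belast h2 q2).
have pback : path e z back by rewrite /back -l2 rev_belast_path.
have pw : path e h1 (q1 ++ back) by rewrite cat_path l1 pback andbT.
have lw : last h1 (q1 ++ back) = h2 by rewrite last_cat l1 /back -l2 last_rev_belast.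
have memw y : y \in q1 ++ back -> (y \in h1 :: q1) || (y \in h2 :: q2).
  by rewrite mem_cat mem_rev => /orP [yq | /mem_belast ->]; rewrite ?inE ?yq ?orbT.
case: (shortenP pw) lw => sp psp usp ssp lsp.
have xsp : x \notin h1 :: sp.
  rewrite inE negb_or; apply/andP; split.
    by apply: contraNneq x1 => ->; apply: mem_head.
  by apply/negP => /ssp /memw /orP [] ?; [move/negP: x1 | move/negP: x2].
have hc : is_graph_cycle e (x :: h1 :: sp).
  apply/and3P; split; last by rewrite /cycle /= ex1 rcons_path psp lsp esym ex2.
    by case: sp {psp usp ssp xsp} lsp => [/= E|] //; move: ne; rewrite E eqxx.
  by rewrite /= xsp; move: usp => /= ->.
have cT : {in x :: h1 :: sp, forall v, v \in T -> v \in [:: x; z]}.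
  move=> v; rewrite inE => /orP [/eqP -> _ | vi vT]; first exact: mem_head.
  rewrite !inE; apply/orP; right; apply/eqP; move: vi vT.
  rewrite inE => /orP [/eqP -> | /ssp /memw /orP [] vi] vT.
  - exact: T1 (mem_head _ _) vT.
  - exact: T1.
  - exact: T2.
by move: (cycle_hits3 hc); rewrite ltnNge (count_le2 _ cT) //; case/and3P: hc.
Qed.

Lemma trace_inj x a b :
  path e x a -> path e x b -> uniq (x :: a) -> uniq (x :: b) ->
  last x a = last x b ->
  [seq v <- a | v \in T] = [seq v <- b | v \in T] -> a = b.
Proof.
elim: a x b => [|h1 a IH] x [|h2 b] // pa pb /andP [xa ua] /andP [xb ub] El EF.
- by move: xb; rewrite [x in x \notin _]El /= mem_last.
- by move: xa; rewrite -[x in x \notin _]El /= mem_last.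
have [eh | ne] := eqVneq h1 h2.
  subst h2; move: pa pb El EF => /= /andP [_ pa] /andP [_ pb] El.
  by case: (h1 \in T) => [[]|] /(IH h1 b pa pb ua ub El) ->.
have [q1 [pq1 sq1 lq1 Tq1]] := first_hit_prefix pa.
have [q2 [pq2 sq2 lq2 Tq2]] := first_hit_prefix pb.
have lq : last h2 q2 = last h1 q1 by rewrite lq1 lq2 -EF; move: El => /= ->.
case: (no_untracked_fork ne pq1 pq2 (erefl _) lq).
- by apply: contra xa => /sq1.
- by apply: contra xb => /sq2.
- exact: Tq1.
- by move=> v vq vT; rewrite -lq; apply: Tq2.
Qed.

Lemma cycle_hits3_tracking s t : tracking_set e s t T.
Proof.
move=> [|x a] [|y b] //= /and4P [/eqP -> pa /eqP la ua] /and4P [/eqP -> pb /eqP lb ub].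
move=> ne EF; apply: ne; congr (_ :: _); apply: (trace_inj pa pb ua ub).
  by rewrite la lb.
by move: EF; case: (s \in T) => [[]|].
Qed.

End CycleHits.

Lemma nbhdS_edge (S : {set V}) v w : v \in S -> e v w -> w \in nbhdS e S.
Proof. by move=> vS evw; apply/bigcupP; exists v; rewrite // inE. Qed.

Lemma fvs_cycle_count (S : {set V}) c :
  fvs e S -> is_graph_cycle e c -> 2 < count [in S :|: nbhdS e S] c.
Proof.
move=> hS hc; have /hasP [v vc vS] := hS c hc.
case/and3P: hc => sz _ cy; have [i r Er] := rot_to vc.
have /permP <- : perm_eq (rot i c) c by rewrite perm_rot.
rewrite Er.
move: sz cy; rewrite -(size_rot i) -(rot_cycle i) Er.
case/lastP: r {Er} => [|[|u1 r] u2] //= _ /andP [evu1].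
rewrite rcons_path last_rcons => /andP [_ eu2v].
have inT w : e v w -> w \in S :|: nbhdS e S.
  by move/(nbhdS_edge vS) => wN; rewrite inE wN orbT.
by rewrite -cats1 count_cat /= inE vS (inT u1) // (inT u2) 1?esym // addn1.
Qed.

Lemma fvs_nbhd_tracking s t (S : {set V}) :
  fvs e S -> tracking_set e s t (S :|: nbhdS e S).
Proof. by move=> hS; apply: cycle_hits3_tracking => c; apply: fvs_cycle_count. Qed.

Definition arc_in (c : seq V) u w r :=
  [/\ path e u (rcons r w), uniq (u :: rcons r w) & {subset u :: rcons r w <= c}].

Lemma cycle_two_arcs c u w :
  is_graph_cycle e c -> u \in c -> w \in c -> u != w ->
  exists r1 r2, [/\ r1 != r2, arc_in c u w r1 & arc_in c u w r2].
Proof.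
case/and3P=> sz uc cy uc' wc nuw; have [i r Er] := rot_to uc'.
have sub y : y \in u :: r -> y \in c by rewrite -Er mem_rot.
have wr : w \in r by move: wc; rewrite -(mem_rot i) Er inE eq_sym (negbTE nuw).
move: sz uc cy; rewrite -(size_rot i) -(rot_uniq i) -(rot_cycle i) Er.
case/splitPr: wr sub => r1 r2 sub sz ur.
rewrite /= rcons_cat cat_path /= => /and3P [pr1 ew pr2].
have sub1 : subseq (u :: rcons r1 w) (u :: r1 ++ w :: r2).
  by rewrite -cat_rcons -cat_cons prefix_subseq.
have sub2 : subseq (u :: w :: r2) (u :: r1 ++ w :: r2) by rewrite /= eqxx suffix_subseq.
exists r1, (rev r2); split; [|split|split].
- apply/eqP => E; case: r1 E {sub1 sub2 sub pr1 ew} sz ur => [|y r1] E.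
    by move/(congr1 size): E; rewrite size_rev /= => <-.
  have : y \in r2 by rewrite -mem_rev -E mem_head.
  by move=> yr2 _ /and3P [_ /negP []]; rewrite mem_cat inE yr2 !orbT.
- by rewrite rcons_path pr1.
- exact: subseq_uniq ur.
- by move=> y /(mem_subseq sub1) /sub.
- have := rev_belast_path w (rcons r2 u).
  by rewrite last_rcons belast_rcons rev_cons pr2 => ->.
- by rewrite -rev_cons /= mem_rev rev_uniq -/(uniq (u :: w :: r2)) (subseq_uniq sub2).
- move=> y; rewrite -rev_cons inE mem_rev => yi; apply/sub/(mem_subseq sub2).
  by rewrite inE.
Qed.

Lemma st_path_uniq s t p : st_path e s t p -> uniq p.
Proof. by case: p => // x p /and4P []. Qed.

Lemma st_path_splice s t c pre u m w suf r :
  st_path e s t (pre ++ u :: m ++ w :: suf) -> ~~ has [in c] (pre ++ suf) ->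
  arc_in c u w r -> st_path e s t (pre ++ u :: r ++ w :: suf).
Proof.
have E x : pre ++ u :: x ++ w :: suf = pre ++ (u :: rcons x w) ++ suf.
  by rewrite /= cat_rcons.
move=> P hc [pr ur sub].
have U : uniq (pre ++ u :: r ++ w :: suf).
  move: (st_path_uniq P); rewrite !E uniq_catCA [uniq (pre ++ _)]uniq_catCA !cat_uniq.
  case/and3P=> _ _ ->; rewrite ur andbT.
  by apply: contra hc; apply: sub_has => v /sub.
move: pr P; rewrite rcons_path => /andP [pr er].
case: pre {E hc} U => [|x pre] /= U /and4P [-> hp hl _]; rewrite U andbT.
  move: hp hl; rewrite !cat_path !last_cat /= => /and3P [_ _ ->] ->.
  by rewrite pr er.
move: hp hl; rewrite !cat_path !last_cat /= !cat_path /= !last_cat /=.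
by move=> /and5P [-> -> _ _ ->] ->; rewrite pr er.
Qed.

Section Reduced.
Variables s t : V.
Hypothesis red : reduced e s t.

Lemma tracking_set_fvs T' : tracking_set e s t T' -> fvs e T'.
Proof.
move=> tr c hc; apply/negPn/negP => /hasPn cT.
have [c0 [c1 [c0c c1c n01 e01]]] :
    exists c0 c1, [/\ c0 \in c, c1 \in c, c0 != c1 & e c0 c1].
  case/and3P: hc => sz uc cy.
  case: c sz uc cy {cT} => [|c0 [|c1 c']] //= _ /and3P [n0 _ _] /andP [e01 _].
  exists c0, c1; split; rewrite ?inE ?eqxx ?orbT //.
  by apply: contraNneq n0 => ->; apply: mem_head.
have [P [stP infP]] := red.2 c0 c1 e01.
have [Pc0 Pc1] : c0 \in P /\ c1 \in P.
  by case/orP: infP => /infixW /mem_subseq sub;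
    split; apply: sub; rewrite !inE eqxx ?orbT.
have [pre [u [m [w [suf [EP uc wc nuw hps]]]]]] :=
  split_first_last (st_path_uniq stP) Pc0 Pc1 c0c c1c n01.
have [r1 [r2 [ne a1 a2]]] := cycle_two_arcs hc uc wc nuw.
rewrite EP in stP.
have trace r : arc_in c u w r ->
    [seq v <- pre ++ u :: r ++ w :: suf | v \in T'] =
    [seq v <- pre ++ u :: w :: suf | v \in T'].
  move=> [_ _ sub]; rewrite !filter_cat /= filter_cat.
  have -> // : [seq v <- r | v \in T'] = [::].
  rewrite (eq_in_filter (a2 := pred0)) ?filter_pred0 // => v vr.
  by apply/negbTE/cT/sub; rewrite inE mem_rcons inE vr !orbT.
apply: (tr _ _ (st_path_splice stP hps a1) (st_path_splice stP hps a2)).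
  move=> E; apply/(negP ne)/eqP.
  by apply: (@splice_inj _ (pre ++ [:: u]) _ _ (w :: suf)); rewrite -!catA.
by rewrite !trace.
Qed.

End Reduced.

Lemma card_nbhdS (S : {set V}) : #|nbhdS e S| <= #|S| * max_degree e.
Proof.
rewrite /nbhdS -sum_nat_const; apply: (@leq_trans (\sum_(v in S) #|nbhd e v|)).
  elim/big_rec2: _ => [|v X n _ IH]; first by rewrite cards0.
  by rewrite cardsU (leq_trans (leq_subr _ _)) // leq_add2l.
by apply: leq_sum => v _; apply: leq_bigmax.
Qed.

Lemma card_closed_nbhd (S : {set V}) :
  #|S :|: nbhdS e S| <= #|S| * (max_degree e).+1.
Proof.
by rewrite mulnS cardsU (leq_trans (leq_subr _ _)) // leq_add2l card_nbhdS.
Qed.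

End Graph.

Theorem mainTheorem7 (V : finType) (e : rel V) (s t : V) (S : {set V}) :
  simple_graph e ->
  reduced e s t ->
  fvs e S ->
  (forall S' : {set V}, fvs e S' -> #|S| <= 2 * #|S'|) ->
  tracking_set e s t (S :|: nbhdS e S) /\
  (forall T' : {set V}, tracking_set e s t T' ->
     #|S :|: nbhdS e S| <= 2 * (max_degree e).+1 * #|T'|).
Proof.
move=> [esym _] red hS hmin; split; first exact: fvs_nbhd_tracking.
move=> T' tr; have hST := hmin T' (tracking_set_fvs esym red tr).
by rewrite (leq_trans (card_closed_nbhd e S)) // mulnAC leq_mul2r hST orbT.
Qed.
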